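(* Let $K\subseteq L$ be a finite extension of $F$-finite fields of characteristic $p>0$ and let $\mathfrak T\colon L\to K$ be a non-zero $K$-linear map. Then every $K$-linear map $\phi\colon K^{1/p^e}\to K$ has a unique $\mathfrak T$-transpose, i.e. there is a unique $L$-linear map $\phi_{\mathfrak T}\colon L^{1/p^e}\to L$ with $\mathfrak T\circ\phi_{\mathfrak T}=\phi\circ\mathfrak T^{1/p^e}$.
   Context: $K^{1/p^e}\subseteq L^{1/p^e}$ are the fields of $p^e$-th roots in an algebraic closure; $\mathfrak T^{1/p^e}\colon L^{1/p^e}\to K^{1/p^e}$ is $x^{1/p^e}\mapsto\mathfrak T(x)^{1/p^e}$. $F$-finite means $[K:K^p]<\infty$. *)

(* Ambient algebraically closed field Omega of char p;
   K, L, K^{1/p^e}, L^{1/p^e} are subsets (subfields) of Omega. *)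
From HB Require Import structures.
From mathcomp Require Import all_boot all_order all_algebra.
Set Implicit Arguments. Unset Strict Implicit. Unset Printing Implicit Defensive.
Import GRing.Theory.
Local Open Scope ring_scope.

Section Defs.
Variable Omega : closedFieldType.

Definition is_subfield (S : Omega -> Prop) : Prop :=
  [/\ S 0, S 1,
      forall x y, S x -> S y -> S (x - y),
      forall x y, S x -> S y -> S (x * y) &
      forall x, S x -> S x^-1].

Definition finite_over (S V : Omega -> Prop) : Prop :=
  exists s : seq Omega, (forall i, (i < size s)%N -> V s`_i) /\
    forall v, V v -> exists c : nat -> Omega,
      (forall i, S (c i)) /\ v = \sum_(i < size s) c i * s`_i.

Definition frob_image (p : nat) (S : Omega -> Prop) : Omega -> Prop :=
  fun y => exists2 x, S x & y = x ^+ p.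

Definition F_finite (p : nat) (S : Omega -> Prop) : Prop :=
  finite_over (frob_image p S) S.

(* S^{1/n} = { x in Omega | x^n in S } (inside the algebraic closure) *)
Definition root_set (n : nat) (S : Omega -> Prop) : Omega -> Prop :=
  fun x => S (x ^+ n).

(* f : A -> B is S-linear (S acting by multiplication in Omega);
   f is a function on Omega, only its restriction to A matters *)
Definition linear_on (S A B : Omega -> Prop) (f : Omega -> Omega) : Prop :=
  [/\ forall x, A x -> B (f x),
      forall x y, A x -> A y -> f (x + y) = f x + f y &
      forall k x, S k -> A x -> f (k * x) = k * f x].

Lemma exists_nth_root (n : nat) (x : Omega) :
  exists y : Omega, (y ^+ n == x) || (n == 0)%N.
Proof.
case: n => [|n]; first by exists 0; rewrite orbT.
have /closed_rootP [y Hy] : size ('X^(n.+1) - x%:P : {poly Omega}) != 1%N.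
  by rewrite size_XnsubC.
exists y; apply/orP; left.
by move: Hy; rewrite /root !hornerE subr_eq0.
Qed.

(* the (unique, in char p with n = p^e) n-th root of x in Omega *)
Definition nth_root (n : nat) (x : Omega) : Omega :=
  xchoose (exists_nth_root n x).

Definition root_map (n : nat) (T : Omega -> Omega) : Omega -> Omega :=
  fun y => nth_root n (T (y ^+ n)).

End Defs.

(* The pairing (x, y) |-> T (x * y) identifies L with its K-dual: c |-> T (c * _)
   is injective because T is nonzero, and every K-linear form on the
   finite-dimensional K-space L is of this shape (a Gram-matrix argument).
   For y in L^{1/p^e} the map l |-> phi (T^{1/p^e} (l * y)) is such a form, so it
   is T (c_y * _) for a unique c_y in L; setting phi_T y := c_y gives the
   transpose, and its L-linearity and uniqueness are again read off from the
   injectivity of the pairing. *)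
From HB Require Import structures.
From mathcomp Require Import all_boot all_order all_algebra.
From mathcomp Require Import boolp.
Import GRing.Theory.
Local Open Scope ring_scope.
Set Implicit Arguments. Unset Strict Implicit.

Section SubfieldPredicates.
Variable Omega : closedFieldType.
Implicit Types (S A B C : Omega -> Prop) (f g : Omega -> Omega) (x y : Omega).

Lemma subfield0 S : is_subfield S -> S 0. Proof. by case. Qed.
Lemma subfield1 S : is_subfield S -> S 1. Proof. by case. Qed.
Lemma subfieldB S x y : is_subfield S -> S x -> S y -> S (x - y).
Proof. by case=> _ _ h _ _; apply: h. Qed.
Lemma subfieldM S x y : is_subfield S -> S x -> S y -> S (x * y).
Proof. by case=> _ _ _ h _; apply: h. Qed.
Lemma subfieldV S x : is_subfield S -> S x -> S x^-1.
Proof. by case=> _ _ _ _ h; apply: h. Qed.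

Lemma subfieldN S x : is_subfield S -> S x -> S (- x).
Proof. by move=> hS Sx; rewrite -sub0r; apply: subfieldB => //; apply: subfield0. Qed.

Lemma subfieldD S x y : is_subfield S -> S x -> S y -> S (x + y).
Proof. by move=> hS Sx Sy; rewrite -[y]opprK; apply: subfieldB => //; apply: subfieldN. Qed.

Lemma subfieldX S x n : is_subfield S -> S x -> S (x ^+ n).
Proof.
move=> hS Sx; elim: n => [|n IH]; first by rewrite expr0; apply: subfield1.
by rewrite exprS; apply: subfieldM.
Qed.

Lemma subfield_sum S n (F : 'I_n -> Omega) :
  is_subfield S -> (forall i, S (F i)) -> S (\sum_(i < n) F i).
Proof.
by move=> hS SF; apply: (big_ind S) => //; [apply: subfield0 | move=> *; apply: subfieldD].
Qed.

Lemma linear_on0 S A B f : is_subfield A -> linear_on S A B f -> f 0 = 0.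
Proof.
move=> hA [_ fD _]; have := fD 0 0 (subfield0 hA) (subfield0 hA).
by rewrite addr0 -{1}[f 0]addr0 => /addrI.
Qed.

Lemma linear_on_sum S A B f n (F : 'I_n -> Omega) :
  is_subfield A -> linear_on S A B f -> (forall i, A (F i)) ->
  f (\sum_(i < n) F i) = \sum_(i < n) f (F i).
Proof.
move=> hA hf AF; pose R a b := A a /\ f a = b.
suff [] : R (\sum_(i < n) F i) (\sum_(i < n) f (F i)) by [].
apply: (big_ind2 R) => // [|a b a' b' [Aa <-] [Aa' <-]].
  by split; [apply: subfield0 | apply: linear_on0 hf].
by case: hf => _ fD _; split; [apply: subfieldD | apply: fD].
Qed.

Lemma linear_on_comb S A B f n (k x : 'I_n -> Omega) :
  is_subfield A -> (forall z, S z -> A z) -> linear_on S A B f ->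
  (forall i, S (k i)) -> (forall i, A (x i)) ->
  f (\sum_(i < n) k i * x i) = \sum_(i < n) k i * f (x i).
Proof.
move=> hA SA hf Sk Ax; rewrite (linear_on_sum hA hf).
  by apply: eq_bigr => i _; case: hf => _ _ fZ; apply: fZ.
by move=> i; apply: subfieldM => //; apply: SA.
Qed.

Lemma linear_onB S A B f x y : is_subfield A -> linear_on S A B f ->
  A x -> A y -> f (x - y) = f x - f y.
Proof.
move=> hA [_ fD _] Ax Ay; have := fD (x - y) y (subfieldB hA Ax Ay) Ay.
by rewrite subrK => ->; rewrite addrK.
Qed.

Lemma linear_on_comp S A B C f g :
  linear_on S A B f -> linear_on S B C g -> linear_on S A C (g \o f).
Proof.
move=> [fA fD fZ] [gB gD gZ]; split=> [x Ax|x y Ax Ay|k x Sk Ax] /=.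
- exact/gB/fA.
- by rewrite fD // gD //; apply: fA.
- by rewrite fZ // gZ //; apply: fA.
Qed.

End SubfieldPredicates.

(* The subfield generated by an arbitrary predicate K: it is closed under the
   field operations without any hypothesis on K, hence carries a fieldType
   structure, and it coincides with K when K is a subfield. *)
Section SubfieldType.
Variables (Omega : closedFieldType) (K : Omega -> Prop).

Definition subfield_closure (x : Omega) : Prop :=
  forall S, is_subfield S -> (forall y, K y -> S y) -> S x.

Definition subfield_closureb : {pred Omega} := fun x => `[< subfield_closure x >].

Lemma subfield_closure_divring : divring_closed subfield_closureb.
Proof.
split.
- by apply/asboolP => S [].
- move=> x y /asboolP Sx /asboolP Sy; apply/asboolP => S hS KS.
  by apply: subfieldB => //; [apply: Sx | apply: Sy].
- move=> x y /asboolP Sx /asboolP Sy; apply/asboolP => S hS KS.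
  by apply: subfieldM => //; [apply: Sx | apply: subfieldV (Sy S hS KS)].
Qed.

HB.instance Definition _ :=
  GRing.isDivringClosed.Build Omega subfield_closureb subfield_closure_divring.

Record subfield_type := SubfieldType
  { subfield_val : Omega; subfield_valP : subfield_closureb subfield_val }.
HB.instance Definition _ := [isSub for subfield_val].
HB.instance Definition _ := [Choice of subfield_type by <:].
HB.instance Definition _ := [SubChoice_isSubComUnitRing of subfield_type by <:].
HB.instance Definition _ := [SubComUnitRing_isSubIntegralDomain of subfield_type by <:].
HB.instance Definition _ := [SubIntegralDomain_isSubField of subfield_type by <:].

Definition to_subfield (x : Omega) : subfield_type := insubd 0 x.

Lemma to_subfieldK x : K x -> val (to_subfield x) = x.
Proof. by move=> Kx; rewrite insubdK //; apply/asboolP => S _; apply. Qed.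

Lemma subfield_val_in (hK : is_subfield K) (u : subfield_type) : K (val u).
Proof. by case: u => x /= /asboolP; apply. Qed.

End SubfieldType.

Section TracePairing.
Variables (Omega : closedFieldType) (K L : Omega -> Prop) (T : Omega -> Omega).
Hypotheses (hK : is_subfield K) (hL : is_subfield L) (KL : forall x, K x -> L x).
Hypotheses (hT : linear_on K L K T) (T_neq0 : exists2 x, L x & T x != 0).

Lemma linear_on_T_mull c : L c -> linear_on K L K (fun l => T (c * l)).
Proof.
move=> Lc; apply: linear_on_comp hT; split=> [l Ll|l l' _ _|k l _ _].
- exact: subfieldM.
- by rewrite mulrDr.
- by rewrite mulrCA.
Qed.

Lemma T_mull_inj c c' : L c -> L c' ->
  (forall l, L l -> T (c * l) = T (c' * l)) -> c = c'.
Proof.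
move=> Lc Lc' eqT; apply/subr0_eq/eqP; apply: contraT => d_neq0.
have [x Lx Tx_neq0] := T_neq0.
have Ld : L (c - c') by apply: subfieldB.
have Ll : L ((c - c')^-1 * x) by apply: subfieldM => //; apply: subfieldV.
have : T ((c - c') * ((c - c')^-1 * x)) = 0.
  by rewrite mulrBl (linear_onB hL hT) ?eqT ?subrr //; apply: subfieldM.
by rewrite mulrA mulfV // mul1r => Tx0; rewrite Tx0 eqxx in Tx_neq0.
Qed.

Section GramMatrix.
Variable s : seq Omega.
Hypotheses (s_in : forall i, (i < size s)%N -> L s`_i)
  (s_span : forall v, L v -> exists c : nat -> Omega,
      (forall i, K (c i)) /\ v = \sum_(i < size s) c i * s`_i).
Let n := size s.
Let KF := subfield_type K.

Lemma s_ord_in (i : 'I_n) : L s`_i. Proof. exact: s_in. Qed.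

Lemma linear_on_eq_span (B : Omega -> Prop) f g :
  linear_on K L B f -> linear_on K L B g ->
  (forall i : 'I_n, f s`_i = g s`_i) -> forall l, L l -> f l = g l.
Proof.
move=> hf hg eq_fg l /s_span [c [Kc ->]].
rewrite (linear_on_comb (k := fun i => c i) hL KL hf) //; last exact: s_ord_in.
rewrite (linear_on_comb (k := fun i => c i) hL KL hg) //; last exact: s_ord_in.
by apply: eq_bigr => i _; rewrite eq_fg.
Qed.

Definition span_comb (a : 'I_n -> KF) : Omega := \sum_(i < n) val (a i) * s`_i.

Lemma span_comb_in a : L (span_comb a).
Proof.
apply: subfield_sum hL _ => i; apply: subfieldM => //; last exact: s_ord_in.
exact: KL (subfield_val_in hK _).
Qed.

Lemma linear_on_span_comb f a : linear_on K L K f ->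
  f (span_comb a) = \sum_(i < n) val (a i) * f s`_i.
Proof.
move=> hf; apply: (linear_on_comb hL KL hf) => i; last exact: s_ord_in.
exact: subfield_val_in hK _.
Qed.

Definition gram_mx : 'M[KF]_n := \matrix_(i, j) to_subfield K (T (s`_i * s`_j)).

Lemma gram_mxE i j : val (gram_mx i j) = T (s`_i * s`_j).
Proof.
rewrite mxE to_subfieldK //.
by case: (linear_on_T_mull (s_ord_in i)) => T_in _ _; apply/T_in/s_ord_in.
Qed.

Lemma gram_mx_kernel m (w : 'M[KF]_(n, m)) :
  gram_mx *m w = 0 -> forall j, span_comb (fun i => w i j) = 0.
Proof.
move=> Mw0 j; apply: T_mull_inj => [||l Ll]; [exact: span_comb_in | exact: subfield0 |].
apply: (linear_on_eq_span (linear_on_T_mull (span_comb_in _)))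
  (linear_on_T_mull (subfield0 hL)) _ _ Ll => i.
rewrite mul0r (linear_on0 hL hT) mulrC.
rewrite (linear_on_span_comb _ (linear_on_T_mull (s_ord_in i))).
transitivity (val ((gram_mx *m w) i j)); last by rewrite Mw0 mxE.
rewrite mxE rmorph_sum; apply: eq_bigr => k _.
by rewrite rmorphM /= gram_mxE mulrC.
Qed.

Section LinearForm.
Variable lam : Omega -> Omega.
Hypothesis hlam : linear_on K L K lam.

Definition form_row : 'rV[KF]_n := \row_j to_subfield K (lam s`_j).

Lemma form_rowE j : val (form_row 0 j) = lam s`_j.
Proof. by rewrite mxE to_subfieldK //; case: hlam => lam_in _ _; apply/lam_in/s_ord_in. Qed.

Lemma form_row_sub_gram : (form_row <= gram_mx)%MS.
Proof.
rewrite submxE; apply/eqP/matrixP => i j; rewrite [i]ord1 !mxE; apply: val_inj.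
transitivity (lam (span_comb (fun k => cokermx gram_mx k j))); last first.
  by rewrite gram_mx_kernel ?mulmx_coker // (linear_on0 hL hlam).
rewrite rmorph_sum (linear_on_span_comb _ hlam); apply: eq_bigr => k _.
by rewrite rmorphM /= form_rowE mulrC.
Qed.

Lemma linear_form_eq_T_mull_span : exists2 c, L c & forall l, L l -> T (c * l) = lam l.
Proof.
have [a form_row_a] := submxP form_row_sub_gram.
exists (span_comb (a 0)); first exact: span_comb_in.
apply: (linear_on_eq_span (linear_on_T_mull (span_comb_in _)) hlam) => j.
rewrite -form_rowE form_row_a mulrC.
rewrite (linear_on_span_comb _ (linear_on_T_mull (s_ord_in j))).
rewrite mxE rmorph_sum; apply: eq_bigr => k _.
by rewrite rmorphM /= gram_mxE [s`_k * _]mulrC.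
Qed.

End LinearForm.
End GramMatrix.

Hypothesis L_finite : finite_over K L.

Lemma linear_form_eq_T_mull lam : linear_on K L K lam ->
  exists2 c, L c & forall l, L l -> T (c * l) = lam l.
Proof.
move=> hlam; have [s [s_in s_span]] := L_finite.
exact: linear_form_eq_T_mull_span s_in s_span _ hlam.
Qed.

Section Transpose.
Variables (A : Omega -> Prop) (Phi : Omega -> Omega).
Hypotheses (A_add : forall y y', A y -> A y' -> A (y + y'))
  (A_mull : forall l y, L l -> A y -> A (l * y)).

Lemma transpose_unique psi psi' :
  linear_on L A L psi -> linear_on L A L psi' ->
  (forall y, A y -> T (psi y) = T (psi' y)) -> forall y, A y -> psi y = psi' y.
Proof.
move=> [psi_in _ psiZ] [psi'_in _ psi'Z] eqT y Ay.
apply: T_mull_inj; [exact: psi_in | exact: psi'_in | move=> l Ll].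
by rewrite ![_ y * l]mulrC -psiZ // -psi'Z // eqT //; apply: A_mull.
Qed.

Hypothesis hPhi : linear_on K A K Phi.

Lemma linear_on_Phi_mulr y : A y -> linear_on K L K (fun l => Phi (l * y)).
Proof.
case: hPhi => Phi_in PhiD PhiZ Ay; split=> [l Ll|l l' Ll Ll'|k l Kk Ll].
- exact/Phi_in/A_mull.
- by rewrite mulrDl PhiD //; apply: A_mull.
- by rewrite -mulrA PhiZ //; apply: A_mull.
Qed.

Lemma transpose_exists :
  exists2 phiT, linear_on L A L phiT & forall y, A y -> T (phiT y) = Phi y.
Proof.
have ex_c y : exists c, A y -> L c /\ forall l, L l -> T (c * l) = Phi (l * y).
  case: (pselect (A y)) => [Ay|nAy]; last by exists 0 => /nAy.
  by have [c Lc Tc] := linear_form_eq_T_mull (linear_on_Phi_mulr Ay); exists c.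
have [phiT phiTP] := choice ex_c.
have phiT_in y : A y -> L (phiT y) by case/phiTP.
have phiT_mull y l : A y -> L l -> T (phiT y * l) = Phi (l * y).
  by move=> /phiTP [_ Tc]; apply: Tc.
have phiT_eq y c : A y -> L c ->
    (forall l, L l -> T (c * l) = Phi (l * y)) -> phiT y = c.
  move=> Ay Lc Tc; apply: T_mull_inj => // [|l Ll]; first exact: phiT_in.
  by rewrite phiT_mull ?Tc.
case: hPhi => _ PhiD _; case: hT => _ TD _.
exists phiT; first split=> [y Ay|y y' Ay Ay'|l y Ll Ay]; first exact: phiT_in.
- apply: phiT_eq => [||l' Ll']; [exact: A_add | by apply: subfieldD => //; apply: phiT_in |].
  rewrite mulrDl TD; try by apply: subfieldM => //; apply: phiT_in.
  by rewrite mulrDr PhiD ?phiT_mull //; apply: A_mull.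
- apply: phiT_eq => [||l' Ll']; [exact: A_mull | by apply: subfieldM => //; apply: phiT_in |].
  rewrite [l * _]mulrC -mulrA [l * l']mulrC phiT_mull ?mulrA //; exact: subfieldM.
- by move=> y Ay; rewrite -[phiT y]mulr1 phiT_mull ?mul1r //; exact: subfield1.
Qed.

End Transpose.

End TracePairing.

Section RootMap.
Variables (Omega : closedFieldType) (q : nat).
Hypothesis q_pchar : [pchar Omega].-nat q.

Lemma pchar_nat_gt0 : (0 < q)%N. Proof. by case/andP: q_pchar. Qed.

Lemma exprq_inj : injective (fun x : Omega => x ^+ q).
Proof.
move=> x y /= eq_xy; apply/subr0_eq/eqP.
have := exprDn_pchar (x - y) y q_pchar; rewrite subrK eq_xy -[LHS]add0r.
by move/addIr/esym/eqP; rewrite expf_eq0 pchar_nat_gt0.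
Qed.

Lemma nth_rootK (x : Omega) : nth_root q x ^+ q = x.
Proof.
case/orP: (xchooseP (exists_nth_root q x)) => [/eqP //|/eqP q0].
by have := pchar_nat_gt0; rewrite q0.
Qed.

Lemma root_setD (S : Omega -> Prop) y y' : is_subfield S ->
  root_set q S y -> root_set q S y' -> root_set q S (y + y').
Proof. by move=> hS Sy Sy'; rewrite /root_set exprDn_pchar //; apply: subfieldD. Qed.

Lemma root_set_mull (S : Omega -> Prop) l y : is_subfield S ->
  S l -> root_set q S y -> root_set q S (l * y).
Proof. by move=> hS Sl Sy; rewrite /root_set exprMn; apply: subfieldM => //; apply: subfieldX. Qed.

Lemma root_map_linear (K L : Omega -> Prop) (T : Omega -> Omega) :
  is_subfield K -> linear_on K L K T ->
  linear_on K (root_set q L) (root_set q K) (root_map q T).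
Proof.
move=> hK [T_in TD TZ]; rewrite /root_set /root_map.
split=> [y Ly|y y' Ly Ly'|k y Kk Ly]; first by rewrite nth_rootK; apply: T_in.
- by apply: exprq_inj; rewrite /= !exprDn_pchar // !nth_rootK TD.
- by apply: exprq_inj; rewrite /= !exprMn !nth_rootK TZ //; apply: subfieldX.
Qed.

End RootMap.

Theorem proposition5p4 (Omega : closedFieldType) (p : nat)
  (K L : Omega -> Prop) (T : Omega -> Omega) :
  p \in [pchar Omega] ->
  is_subfield K -> is_subfield L -> (forall x, K x -> L x) ->
  finite_over K L ->
  F_finite p K -> F_finite p L ->
  linear_on K L K T ->
  (exists2 x, L x & T x != 0) ->
  forall (e : nat) (phi : Omega -> Omega),
    linear_on K (root_set (p ^ e) K) K phi ->
    exists phiT : Omega -> Omega,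
      [/\ linear_on L (root_set (p ^ e) L) L phiT,
          (forall y, root_set (p ^ e) L y ->
              T (phiT y) = phi (root_map (p ^ e) T y)) &
          forall psi : Omega -> Omega,
            linear_on L (root_set (p ^ e) L) L psi ->
            (forall y, root_set (p ^ e) L y ->
              T (psi y) = phi (root_map (p ^ e) T y)) ->
            forall y, root_set (p ^ e) L y -> psi y = phiT y].
Proof.
move=> p_pchar hK hL KL L_finite _ _ hT T_neq0 e phi hphi.
have q_pchar : [pchar Omega].-nat (p ^ e)%N.
  by rewrite pnatX (pnatE _ (pcharf_prime p_pchar)) p_pchar.
have hPhi := linear_on_comp (root_map_linear q_pchar hK hT) hphi.
have A_add := root_setD q_pchar hL.
have A_mull l y : L l -> root_set (p ^ e) L y -> root_set (p ^ e) L (l * y).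
  exact: root_set_mull.
have [phiT phiT_lin phiTE] :=
  transpose_exists hK hL KL hT T_neq0 L_finite A_add A_mull hPhi.
exists phiT; split=> // psi psi_lin psiE y Ly.
apply: (transpose_unique hL hT T_neq0 A_mull psi_lin phiT_lin) => // z Lz.
by rewrite psiE ?phiTE.
Qed.
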